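(* Let $E_1,E_2$ be vector bundles over $M$ with connections $D_1,D_2$ and let $(E,D)=(E_1\oplus E_2,D_1+D_2)$. Then $D$ is exact if and only if $D_1$ and $D_2$ are both exact.
   Context: For a connection $D$ on $E$: $D^\wedge$ is the exterior covariant derivative $\phi_b{}^\alpha\mapsto D_{[a}\phi_{b]}{}^\alpha$, $\kappa=D^\wedge\circ D$ the curvature (assumed of constant rank). $D$ is exact if every section $\phi$ of $\Lambda^1\otimes E$ with $D^\wedge\phi=\kappa(\psi)$ for some section $\psi$ of $E$ is of the form $D\eta$ for some section $\eta$ of $E$. Statements are local. *)

(* Local model of a vector bundle with connection:
   M is represented (locally) by an open set U of R^n = 'rV[R]_n, the bundle
   E of rank k is trivialised over U, sections are families indexed by the
   fibre index 'I_k, and a connection is given by its coefficients Γ_a^α_β. *)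
From HB Require Import structures.
From mathcomp Require Import all_boot all_order all_algebra.
From mathcomp Require Import all_classical all_reals all_analysis.
Set Implicit Arguments. Unset Strict Implicit. Unset Printing Implicit Defensive.
Import Order.TTheory GRing.Theory Num.Theory.
Import numFieldNormedType.Exports.
Local Open Scope classical_set_scope.
Local Open Scope ring_scope.

Section Defs.
Variable R : realType.
Variable n : nat.

Definition ebasis (a : 'I_n) : 'rV[R]_n := delta_mx 0 a.

Definition partial (a : 'I_n) (f : 'rV[R]_n -> R) (x : 'rV[R]_n) : R :=
  'D_(ebasis a) f x.

Fixpoint Cm (U : set 'rV[R]_n) (m : nat) (f : 'rV[R]_n -> R) : Prop :=
  match m with
  | 0 => forall x, U x -> {for x, continuous f}
  | m'.+1 => (forall x, U x -> {for x, continuous f}) /\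
             (forall x a, U x -> derivable f x (ebasis a)) /\
             (forall a, Cm U m' (partial a f))
  end.

Definition smooth_on (U : set 'rV[R]_n) (f : 'rV[R]_n -> R) : Prop :=
  forall m, Cm U m f.

Variable k : nat.

(* sections of E, of Λ^1 ⊗ E, of Λ^2 ⊗ E (components) *)
Definition sec0 := 'I_k -> 'rV[R]_n -> R.
Definition sec1 := 'I_n -> 'I_k -> 'rV[R]_n -> R.
Definition sec2 := 'I_n -> 'I_n -> 'I_k -> 'rV[R]_n -> R.

(* connection coefficients Γ_a^α_β : D_a η^α = ∂_a η^α + Γ_a^α_β η^β *)
Definition conn := 'I_n -> 'I_k -> 'I_k -> 'rV[R]_n -> R.

Definition conn_smooth (U : set 'rV[R]_n) (G : conn) : Prop :=
  forall a al be, smooth_on U (G a al be).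

Definition sec0_smooth U (eta : sec0) := forall al, smooth_on U (eta al).
Definition sec1_smooth U (phi : sec1) := forall a al, smooth_on U (phi a al).

Definition Dc (G : conn) (eta : sec0) : sec1 := fun a al x =>
  partial a (eta al) x + \sum_(be < k) G a al be x * eta be x.

Definition Dwedge (G : conn) (phi : sec1) : sec2 := fun a b al x =>
  2^-1 * ((partial a (phi b al) x + \sum_(be < k) G a al be x * phi b be x)
        - (partial b (phi a al) x + \sum_(be < k) G b al be x * phi a be x)).

Definition kappa (G : conn) (psi : sec0) : sec2 := Dwedge G (Dc G psi).

(* matrix of the fibrewise linear map κ_x : E_x -> Λ^2 ⊗ E_x (row β is the
   image of the β-th basis vector, computed on the constant section) *)
Definition curv_mx (G : conn) (x : 'rV[R]_n)
  : 'M[R]_(k, #|{: 'I_n * 'I_n * 'I_k}|) :=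
  \matrix_(be < k, j < #|{: 'I_n * 'I_n * 'I_k}|)
    let: (a, b, al) := enum_val j in
    kappa G (fun ga (_ : 'rV[R]_n) => (ga == be)%:R) a b al x.

Definition const_rank_curv (U : set 'rV[R]_n) (G : conn) : Prop :=
  exists r : nat, forall x, U x -> \rank (curv_mx G x) = r.

Definition exact_conn (U : set 'rV[R]_n) (G : conn) : Prop :=
  forall (phi : sec1) (psi : sec0),
    sec1_smooth U phi -> sec0_smooth U psi ->
    (forall a b al x, U x -> Dwedge G phi a b al x = kappa G psi a b al x) ->
    exists eta : sec0, sec0_smooth U eta /\
      forall a al x, U x -> Dc G eta a al x = phi a al x.

End Defs.

Definition dsum_conn (R : realType) (n k1 k2 : nat)
  (G1 : conn R n k1) (G2 : conn R n k2) : conn R n (k1 + k2) :=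
  fun a i j x =>
    match fintype.split i, fintype.split j with
    | inl i1, inl j1 => G1 a i1 j1 x
    | inr i2, inr j2 => G2 a i2 j2 x
    | _, _ => 0
    end.

(** Everything happens block by block: the connection coefficients of [D_1 + D_2] are
    block diagonal, so [D], [D^∧] and [κ] of a section of [E_1 ⊕ E_2] restrict, on
    each summand, to those of [D_1] and [D_2].  Hence the exactness problem for [D]
    is the pair of exactness problems for [D_1] and [D_2], solved independently and
    glued back together; conversely a problem for [D_1] alone is the one for [D]
    whose [E_2]-component is zero. *)
From mathcomp Require Import all_boot all_order all_algebra.
From mathcomp Require Import all_classical all_reals all_analysis.
Set Implicit Arguments. Unset Strict Implicit. Unset Printing Implicit Defensive.
Import GRing.Theory.
Import numFieldNormedType.Exports.
Local Open Scope ring_scope.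

Definition ord_join (T : Type) (m n : nat) (f : 'I_m -> T) (g : 'I_n -> T)
    : 'I_(m + n) -> T :=
  fun i => match fintype.split i with inl i1 => f i1 | inr i2 => g i2 end.

Lemma ord_join_lshift (T : Type) m n (f : 'I_m -> T) (g : 'I_n -> T) i :
  ord_join f g (lshift n i) = f i.
Proof. by rewrite /ord_join (unsplitK (inl i)). Qed.

Lemma ord_join_rshift (T : Type) m n (f : 'I_m -> T) (g : 'I_n -> T) i :
  ord_join f g (rshift m i) = g i.
Proof. by rewrite /ord_join (unsplitK (inr i)). Qed.

Lemma forall_ord_join (T : Type) (P : T -> Prop) m n (f : 'I_m -> T) (g : 'I_n -> T) :
  (forall i, P (f i)) -> (forall j, P (g j)) -> forall i, P (ord_join f g i).
Proof.
by move=> Pf Pg i; case: (split_ordP i) => j ->; rewrite ?ord_join_lshift ?ord_join_rshift.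
Qed.

Lemma ord_join_shift (T : Type) m n (f : 'I_(m + n) -> T) :
  ord_join (fun i => f (lshift n i)) (fun j => f (rshift m j)) = f.
Proof.
by apply/funext => i; case: (split_ordP i) => j ->; rewrite ?ord_join_lshift ?ord_join_rshift.
Qed.

Definition Dwedge_eq_kappa (R : realType) n k (U : set 'rV[R]_n) (G : conn R n k)
    (phi : sec1 R n k) (psi : sec0 R n k) : Prop :=
  forall a b al x, U x -> Dwedge G phi a b al x = kappa G psi a b al x.

Definition Dc_solvable (R : realType) n k (U : set 'rV[R]_n) (G : conn R n k)
    (phi : sec1 R n k) : Prop :=
  exists eta : sec0 R n k, sec0_smooth U eta /\
    forall a al x, U x -> Dc G eta a al x = phi a al x.

Section ZeroSection.
Context {R : realType} {n k : nat} {U : set 'rV[R]_n}.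

Lemma partial_cst0 a (x : 'rV[R]_n) : partial a (fun _ => 0) x = 0.
Proof. exact: derive_cst. Qed.

Lemma smooth_on_cst0 : smooth_on U (fun _ => 0).
Proof.
have cont0 x : U x -> {for x, continuous (fun _ : 'rV[R]_n => (0 : R))}.
  by move=> _; exact: cst_continuous.
have partial0 a : partial a (fun _ : 'rV[R]_n => (0 : R)) = fun _ => 0.
  by apply/funext => x; exact: partial_cst0.
move=> m; elim: m => [|m IHm] //=; split=> //; split=> [x a _|a].
  exact: derivable_cst.
by rewrite partial0.
Qed.

Lemma Dwedge0 (G : conn R n k) a b al x : Dwedge G (fun _ _ _ => 0) a b al x = 0.
Proof.
by rewrite /Dwedge !partial_cst0 !big1 ?addr0 ?subrr ?mulr0 // => i _; rewrite mulr0.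
Qed.

Lemma kappa0 (G : conn R n k) a b al x : kappa G (fun _ _ => 0) a b al x = 0.
Proof.
rewrite /kappa (_ : Dc G _ = fun _ _ _ => 0) ?Dwedge0 //.
apply/funext => c; apply/funext => i; apply/funext => y.
by rewrite /Dc partial_cst0 big1 ?addr0 // => j _; rewrite mulr0.
Qed.

Lemma sec0_smooth0 : sec0_smooth U ((fun _ _ => 0) : sec0 R n k).
Proof. by move=> al; exact: smooth_on_cst0. Qed.

Lemma sec1_smooth0 : sec1_smooth U ((fun _ _ _ => 0) : sec1 R n k).
Proof. by move=> a al; exact: smooth_on_cst0. Qed.

Lemma Dwedge_eq_kappa0 {G : conn R n k} :
  Dwedge_eq_kappa U G (fun _ _ _ => 0) (fun _ _ => 0).
Proof. by move=> a b al x _; rewrite Dwedge0 kappa0. Qed.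

End ZeroSection.

Section DirectSum.
Variables (R : realType) (n k1 k2 : nat) (G1 : conn R n k1) (G2 : conn R n k2).
Local Notation G := (dsum_conn G1 G2).

Lemma sum_dsum_conn_lshift a al x (f : 'I_(k1 + k2) -> R) :
  \sum_(be < k1 + k2) G a (lshift k2 al) be x * f be =
  \sum_(be < k1) G1 a al be x * f (lshift k2 be).
Proof.
rewrite big_split_ord /= [X in _ + X]big1 ?addr0 => [|be _].
  by apply: eq_bigr => be _; rewrite /dsum_conn !(unsplitK (inl _)).
by rewrite /dsum_conn (unsplitK (inl _)) (unsplitK (inr _)) mul0r.
Qed.

Lemma sum_dsum_conn_rshift a al x (f : 'I_(k1 + k2) -> R) :
  \sum_(be < k1 + k2) G a (rshift k1 al) be x * f be =
  \sum_(be < k2) G2 a al be x * f (rshift k1 be).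
Proof.
rewrite big_split_ord /= big1 ?add0r => [|be _].
  by apply: eq_bigr => be _; rewrite /dsum_conn !(unsplitK (inr _)).
by rewrite /dsum_conn (unsplitK (inl _)) (unsplitK (inr _)) mul0r.
Qed.

Lemma Dc_dsum_lshift eta eta1 :
  (forall i, eta (lshift k2 i) = eta1 i) -> forall a al x,
  Dc G eta a (lshift k2 al) x = Dc G1 eta1 a al x.
Proof.
move=> eta_l a al x; rewrite -(funext eta_l).
by rewrite /Dc sum_dsum_conn_lshift.
Qed.

Lemma Dc_dsum_rshift eta eta2 :
  (forall i, eta (rshift k1 i) = eta2 i) -> forall a al x,
  Dc G eta a (rshift k1 al) x = Dc G2 eta2 a al x.
Proof.
move=> eta_r a al x; rewrite -(funext eta_r).
by rewrite /Dc sum_dsum_conn_rshift.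
Qed.

Lemma Dwedge_dsum_lshift phi phi1 :
  (forall c i, phi c (lshift k2 i) = phi1 c i) -> forall a b al x,
  Dwedge G phi a b (lshift k2 al) x = Dwedge G1 phi1 a b al x.
Proof.
move=> phi_l a b al x; rewrite -(funext (fun c => funext (phi_l c))).
by rewrite /Dwedge !sum_dsum_conn_lshift.
Qed.

Lemma Dwedge_dsum_rshift phi phi2 :
  (forall c i, phi c (rshift k1 i) = phi2 c i) -> forall a b al x,
  Dwedge G phi a b (rshift k1 al) x = Dwedge G2 phi2 a b al x.
Proof.
move=> phi_r a b al x; rewrite -(funext (fun c => funext (phi_r c))).
by rewrite /Dwedge !sum_dsum_conn_rshift.
Qed.

Lemma kappa_dsum_lshift psi psi1 :
  (forall i, psi (lshift k2 i) = psi1 i) -> forall a b al x,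
  kappa G psi a b (lshift k2 al) x = kappa G1 psi1 a b al x.
Proof.
move=> psi_l; apply: Dwedge_dsum_lshift => c i.
by apply/funext => y; exact: Dc_dsum_lshift.
Qed.

Lemma kappa_dsum_rshift psi psi2 :
  (forall i, psi (rshift k1 i) = psi2 i) -> forall a b al x,
  kappa G psi a b (rshift k1 al) x = kappa G2 psi2 a b al x.
Proof.
move=> psi_r; apply: Dwedge_dsum_rshift => c i.
by apply/funext => y; exact: Dc_dsum_rshift.
Qed.

Variable U : set 'rV[R]_n.

Lemma Dwedge_eq_kappa_dsum phi1 psi1 phi2 psi2 :
  Dwedge_eq_kappa U G1 phi1 psi1 -> Dwedge_eq_kappa U G2 phi2 psi2 ->
  Dwedge_eq_kappa U G (fun a => ord_join (phi1 a) (phi2 a)) (ord_join psi1 psi2).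
Proof.
move=> eq1 eq2 a b i x Ux; case: (split_ordP i) => j ->.
  rewrite (Dwedge_dsum_lshift (fun c => ord_join_lshift (phi1 c) (phi2 c))).
  by rewrite (kappa_dsum_lshift (ord_join_lshift psi1 psi2)) eq1.
rewrite (Dwedge_dsum_rshift (fun c => ord_join_rshift (phi1 c) (phi2 c))).
by rewrite (kappa_dsum_rshift (ord_join_rshift psi1 psi2)) eq2.
Qed.

Lemma Dwedge_eq_kappa_dsum_lshift phi psi :
  Dwedge_eq_kappa U G phi psi ->
  Dwedge_eq_kappa U G1 (fun a i => phi a (lshift k2 i)) (fun i => psi (lshift k2 i)).
Proof.
move=> curv_eq a b i x Ux.
by rewrite -(Dwedge_dsum_lshift (fun _ _ => erefl)) -(kappa_dsum_lshift (fun _ => erefl)) curv_eq.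
Qed.

Lemma Dwedge_eq_kappa_dsum_rshift phi psi :
  Dwedge_eq_kappa U G phi psi ->
  Dwedge_eq_kappa U G2 (fun a i => phi a (rshift k1 i)) (fun i => psi (rshift k1 i)).
Proof.
move=> curv_eq a b i x Ux.
by rewrite -(Dwedge_dsum_rshift (fun _ _ => erefl)) -(kappa_dsum_rshift (fun _ => erefl)) curv_eq.
Qed.

Lemma Dc_solvable_dsum phi1 phi2 :
  Dc_solvable U G1 phi1 -> Dc_solvable U G2 phi2 ->
  Dc_solvable U G (fun a => ord_join (phi1 a) (phi2 a)).
Proof.
move=> [eta1 [s1 e1]] [eta2 [s2 e2]]; exists (ord_join eta1 eta2); split.
  exact: forall_ord_join.
move=> a i x Ux; case: (split_ordP i) => j ->.
  rewrite ord_join_lshift -e1 //; exact/Dc_dsum_lshift/ord_join_lshift.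
rewrite ord_join_rshift -e2 //; exact/Dc_dsum_rshift/ord_join_rshift.
Qed.

Lemma Dc_solvable_dsum_lshift phi phi1 :
  (forall a i, phi a (lshift k2 i) = phi1 a i) ->
  Dc_solvable U G phi -> Dc_solvable U G1 phi1.
Proof.
move=> phi_l [eta [s e]]; exists (fun i => eta (lshift k2 i)); split=> [i|a i x Ux].
  exact: s.
by rewrite -(Dc_dsum_lshift (fun _ => erefl)) e // phi_l.
Qed.

Lemma Dc_solvable_dsum_rshift phi phi2 :
  (forall a i, phi a (rshift k1 i) = phi2 a i) ->
  Dc_solvable U G phi -> Dc_solvable U G2 phi2.
Proof.
move=> phi_r [eta [s e]]; exists (fun i => eta (rshift k1 i)); split=> [i|a i x Ux].
  exact: s.
by rewrite -(Dc_dsum_rshift (fun _ => erefl)) e // phi_r.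
Qed.

Lemma exact_conn_dsum :
  exact_conn U G1 -> exact_conn U G2 -> exact_conn U G.
Proof.
move=> ex1 ex2 phi psi sphi spsi curv_eq.
have phi_split : (fun a => ord_join (fun i => phi a (lshift k2 i))
                                    (fun j => phi a (rshift k1 j))) = phi.
  by apply/funext => a; exact: ord_join_shift.
rewrite -phi_split; apply: Dc_solvable_dsum.
  by apply: ex1 (Dwedge_eq_kappa_dsum_lshift curv_eq) => [a i|i]; [exact: sphi | exact: spsi].
by apply: ex2 (Dwedge_eq_kappa_dsum_rshift curv_eq) => [a i|i]; [exact: sphi | exact: spsi].
Qed.

Lemma exact_conn_dsum_solvable phi1 psi1 phi2 psi2 :
  exact_conn U G ->
  sec1_smooth U phi1 -> sec0_smooth U psi1 -> Dwedge_eq_kappa U G1 phi1 psi1 ->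
  sec1_smooth U phi2 -> sec0_smooth U psi2 -> Dwedge_eq_kappa U G2 phi2 psi2 ->
  Dc_solvable U G1 phi1 /\ Dc_solvable U G2 phi2.
Proof.
move=> exG sphi1 spsi1 eq1 sphi2 spsi2 eq2.
have sol := exG _ _ (fun a => forall_ord_join (sphi1 a) (sphi2 a))
  (forall_ord_join spsi1 spsi2) (Dwedge_eq_kappa_dsum eq1 eq2).
split.
  by apply: Dc_solvable_dsum_lshift sol => a; exact: ord_join_lshift.
by apply: Dc_solvable_dsum_rshift sol => a; exact: ord_join_rshift.
Qed.

End DirectSum.

Theorem proposition2p6 (R : realType) (n k1 k2 : nat)
  (U : set 'rV[R]_n) (hU : open U)
  (G1 : conn R n k1) (G2 : conn R n k2)
  (hG1 : conn_smooth U G1) (hG2 : conn_smooth U G2)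
  (hr1 : const_rank_curv U G1) (hr2 : const_rank_curv U G2) :
  exact_conn U (dsum_conn G1 G2) <-> (exact_conn U G1 /\ exact_conn U G2).
Proof.
(* The splitting is fibrewise linear algebra: openness, smoothness of the
   coefficients and constant rank of the curvature are not used. *)
split=> [exG | [ex1 ex2]]; last exact: exact_conn_dsum.
split=> phi psi sphi spsi curv_eq.
  exact: (exact_conn_dsum_solvable exG sphi spsi curv_eq
            sec1_smooth0 sec0_smooth0 Dwedge_eq_kappa0).1.
exact: (exact_conn_dsum_solvable exG sec1_smooth0 sec0_smooth0 Dwedge_eq_kappa0
          sphi spsi curv_eq).2.
Qed.
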